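(* Let $f\ge0$ be integrable on $[-\pi,\pi]$ with $\int f>0$ and such that $\lim_{n\to\infty}\sigma_{n+1}^2(f)/\sigma_n^2(f)=1$. Let $p_n$ be the optimal polynomial for $f$ and define $K_n(\lambda)=|p_n(e^{i\lambda})|^2f(\lambda)/\sigma_n^2(f)$. Then $K_n\ge0$, $\int_{-\pi}^{\pi}K_n(\lambda)\,d\lambda=1$, and for every $0<\delta\le\pi$, $$\lim_{n\to\infty}\int_{\delta\le|\lambda|\le\pi}K_n(\lambda)\,d\lambda=0;$$ i.e. $\{K_n\}$ is an approximate identity.
   Context: $\sigma_n^2(f)=\min_{q\in\mathcal{Q}_n(1)}\int_{-\pi}^{\pi}|q(e^{i\lambda})|^2f(\lambda)\,d\lambda$, where $\mathcal{Q}_n(1)$ is the set of complex polynomials of degree at most $n$ with $q(1)=1$; the optimal polynomial $p_n\in\mathcal{Q}_n(1)$ is the unique minimizer. *)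

From HB Require Import structures.
From mathcomp Require Import all_boot all_order all_algebra.
From mathcomp Require Import all_classical all_reals all_analysis.
From mathcomp Require Import complex.

Set Implicit Arguments.
Unset Strict Implicit.
Unset Printing Implicit Defensive.

Import Order.TTheory GRing.Theory Num.Theory.
Local Open Scope ring_scope.
Local Open Scope classical_set_scope.

Definition expi (R : realType) (x : R) : R[i] := Complex (cos x) (sin x).

Definition sqmod (R : realType) (z : R[i]) : R :=
  (complex.Re z) ^+ 2 + (complex.Im z) ^+ 2.

Definition Qn1 (R : realType) (n : nat) : set {poly R[i]} :=
  [set q : {poly R[i]} | (size q <= n.+1)%N /\ q.[1] = 1].

Definition qform (R : realType) (f : R -> R) (q : {poly R[i]}) : R :=
  Rintegral (@lebesgue_measure R) `[(- pi)%R, pi]%classic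
    (fun x => sqmod q.[expi x] * f x).

(* sigma_n^2(f) = min_{q in Q_n(1)} qform f q (written as an infimum;
   the minimum is attained) *)
Definition sigma2 (R : realType) (f : R -> R) (n : nat) : R :=
  inf [set qform f q | q in @Qn1 R n].

Definition optimal_poly (R : realType) (f : R -> R) (n : nat)
  (p : {poly R[i]}) : Prop :=
  @Qn1 R n p /\ qform f p = sigma2 f n.

Definition Kn (R : realType) (f : R -> R) (p : nat -> {poly R[i]}) (n : nat)
  (x : R) : R := sqmod (p n).[expi x] * f x / sigma2 f n.

From HB Require Import structures.
From mathcomp Require Import all_boot all_order all_algebra.
From mathcomp Require Import all_classical all_reals all_analysis.
From mathcomp Require Import complex.
From mathcomp Require Import ring lra measurable_realfun.

(** Multiplying [p_n] by [(1 + z) / 2] gives a competitor of degree [n + 1]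
  whose squared modulus on the circle is [|p_n|^2 (1 + cos) / 2], so
  [sigma_(n+1)^2 <= sigma_n^2 - \int |p_n|^2 f (1 - cos) / 2].  On
  [delta <= |x| <= pi] the weight [(1 - cos x) / 2] is at least
  [k = (1 - cos delta) / 2 > 0], hence the mass of [K_n] there is at most
  [(1 - sigma_(n+1)^2 / sigma_n^2) / k], which tends to [0]. *)

Set Implicit Arguments.
Unset Strict Implicit.
Unset Printing Implicit Defensive.

Import Order.TTheory GRing.Theory Num.Theory.
Import numFieldNormedType.Exports.
Local Open Scope ring_scope.
Local Open Scope classical_set_scope.

Lemma sqmodE (R : realType) (z : R[i]) : (sqmod z)%:C%C = `|z| ^+ 2.
Proof. exact: add_Re2_Im2. Qed.

Lemma sqmodM (R : realType) (a b : R[i]) : sqmod (a * b) = sqmod a * sqmod b.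
Proof. by apply: (@complexI R); rewrite rmorphM /= !sqmodE normrM exprMn. Qed.

Lemma sqmod_ge0 (R : realType) (z : R[i]) : 0 <= sqmod z.
Proof. by rewrite addr_ge0 ?sqr_ge0. Qed.

Lemma measurable_horner d (T : measurableType d) (R : realType) (D : set T)
    (g : T -> R[i]) (q : {poly R[i]}) :
  measurable_fun D (fun x => complex.Re (g x)) ->
  measurable_fun D (fun x => complex.Im (g x)) ->
  measurable_fun D (fun x => complex.Re q.[g x]) /\
  measurable_fun D (fun x => complex.Im q.[g x]).
Proof.
move=> mRe mIm; elim/poly_ind: q => [|q c [mqRe mqIm]].
  by split; under eq_fun do rewrite horner0; exact: measurable_cst.
split.
- under eq_fun do rewrite hornerMXaddC.
  have -> : (fun x => complex.Re (q.[g x] * g x + c)) =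
      (fun x => complex.Re q.[g x]) \* (fun x => complex.Re (g x)) \-
      (fun x => complex.Im q.[g x]) \* (fun x => complex.Im (g x)) \+ cst (complex.Re c).
    by apply/funext => x /=; case: q.[g x] => ? ?; case: (g x) => ? ?; case: c.
  by apply: measurable_funD; [apply: measurable_funB; exact: measurable_funM|].
- under eq_fun do rewrite hornerMXaddC.
  have -> : (fun x => complex.Im (q.[g x] * g x + c)) =
      (fun x => complex.Re q.[g x]) \* (fun x => complex.Im (g x)) \+
      (fun x => complex.Im q.[g x]) \* (fun x => complex.Re (g x)) \+ cst (complex.Im c).
    by apply/funext => x /=; case: q.[g x] => ? ?; case: (g x) => ? ?; case: c.
  by apply: measurable_funD; [apply: measurable_funD; exact: measurable_funM|].
Qed.

Lemma measurable_sqmod_horner_expi (R : realType) (q : {poly R[i]}) :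
  measurable_fun setT (fun x : R => sqmod q.[expi x]).
Proof.
have mcos : measurable_fun setT (@cos R) := continuous_measurable_fun (@continuous_cos R).
have msin : measurable_fun setT (@sin R) := continuous_measurable_fun (@continuous_sin R).
have [mRe mIm] := measurable_horner (g := @expi R) q mcos msin.
by apply: measurable_funD; exact: measurable_funM.
Qed.

Definition halfX1 (R : realType) : {poly R[i]} := (Complex 2^-1 0)%:P * ('X + 1).

Lemma halfX1_1 (R : realType) : (halfX1 R).[1] = 1.
Proof.
rewrite /halfX1 hornerM hornerC hornerD hornerX hornerC.
by apply/eqP; rewrite eq_complex /= !(mul0r, mulr0, addr0, subr0) mulVf ?eqxx.
Qed.

Lemma sqmod_halfX1_expi (R : realType) (x : R) :
  sqmod (halfX1 R).[expi x] = (1 + cos x) / 2.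
Proof.
rewrite /halfX1 hornerM hornerC hornerD hornerX hornerC /expi /sqmod /=.
have := cos2Dsin2 x; rewrite !(mul0r, mulr0, addr0, subr0) => cs.
nra.
Qed.

Lemma Qn1_1 (R : realType) n : Qn1 n (1 : {poly R[i]}).
Proof. by split; [rewrite size_poly1 | rewrite hornerC]. Qed.

Lemma Qn1_mul_halfX1 (R : realType) n (q : {poly R[i]}) :
  Qn1 n q -> Qn1 n.+1 (q * halfX1 R).
Proof.
move=> [size_q q1]; split; last by rewrite hornerM q1 halfX1_1 mulr1.
have size_h : (size (halfX1 R) <= 2)%N.
  apply: leq_trans (size_polyMleq _ _) _.
  by rewrite size_XaddC addn2; exact: size_polyC_leq1.
apply: leq_trans (size_polyMleq _ _) _.
by rewrite -subn1 leq_subLR add1n -addn2 leq_add.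
Qed.

Lemma ge0_integral_weight_le d (T : measurableType d) (R : realType)
    (mu : {measure set T -> \bar R}) (D A : set T) (h w : T -> R) (k : R) :
  measurable D -> measurable A -> A `<=` D ->
  measurable_fun D h -> measurable_fun D w ->
  (forall x, D x -> 0 <= h x) -> (forall x, D x -> 0 <= w x <= 1) ->
  0 <= k -> (forall x, A x -> k <= 1 - w x) ->
  (k%:E * \int[mu]_(x in A) (h x)%:E + \int[mu]_(x in D) (h x * w x)%:E
    <= \int[mu]_(x in D) (h x)%:E)%E.
Proof.
move=> mD mA AD mh mw h0 w01 k0 kw.
have mhw : measurable_fun D (fun x => (h x * w x)%:E).
  by apply/measurable_EFinP; exact: measurable_funM.
have mhw' : measurable_fun D (fun x => (h x * (1 - w x))%:E).
  apply/measurable_EFinP; apply: measurable_funM => //.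
  by apply: measurable_funB => //; exact: measurable_cst.
have hw0 x : D x -> (0 <= (h x * w x)%:E)%E.
  by move=> Dx; have /andP[w0 _] := w01 x Dx; rewrite lee_fin mulr_ge0 ?h0.
have hw'0 x : D x -> (0 <= (h x * (1 - w x))%:E)%E.
  by move=> Dx; have /andP[_ w1] := w01 x Dx; rewrite lee_fin mulr_ge0 ?h0 ?subr_ge0.
have -> : (\int[mu]_(x in D) (h x)%:E =
    \int[mu]_(x in D) (h x * w x)%:E + \int[mu]_(x in D) (h x * (1 - w x))%:E)%E.
  rewrite -ge0_integralD //; apply: eq_integral => x _.
  by rewrite -EFinD -mulrDr addrC subrK mulr1.
rewrite addeC leeD2r //.
rewrite -ge0_integralZl_EFin //; last first.
- by apply/measurable_EFinP; exact: measurable_funS mh.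
- by move=> x /AD Dx; rewrite lee_fin h0.
apply: le_trans (ge0_subset_integral _ mA mD mhw' hw'0 AD).
apply: ge0_le_integral => //.
- by move=> x /AD Dx; rewrite -EFinM lee_fin mulr_ge0 ?h0.
- apply: emeasurable_funM; first exact: measurable_cst.
  by apply/measurable_EFinP; exact: measurable_funS mh.
- exact: measurable_funS mhw'.
- move=> x Ax; rewrite -EFinM lee_fin mulrC.
  by apply: ler_wpM2l; [exact/h0/AD | exact: kw].
Qed.

Lemma gt0_ratio_cvg1 (R : realType) (u : R ^nat) :
  (forall n, 0 <= u n) -> (forall n, u n.+1 <= u n) ->
  (fun n => u n.+1 / u n) @ \oo --> (1 : R) -> forall n, 0 < u n.
Proof.
move=> u0 uS ratio n; rewrite lt_neqAle u0 andbT; apply/eqP => un0.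
have u_eq0 m : u (m + n)%N = 0.
  by elim: m => [|m ih] //; apply/eqP; rewrite eq_le u0 -ih uS.
move: ratio; rewrite -(cvg_shiftn n) /=.
have -> : (fun m => u (m + n).+1 / u (m + n)%N) = fun=> 0.
  by apply/funext => m; rewrite u_eq0 invr0 mulr0.
by move=> /(norm_cvg_unique (cvg_cst 0))/eqP; rewrite eq_sym oner_eq0.
Qed.

Lemma cos_lt1 (R : realType) (x : R) : 0 < x <= pi -> cos x < 1.
Proof.
move=> /andP[x0 xpi].
have x_itv : x \in `[0, pi]%O by rewrite in_itv /= (ltW x0).
have zero_itv : (0 : R) \in `[0, pi]%O by rewrite in_itv /= lexx pi_ge0.
by rewrite -[X in _ < X]cos0 ltr_cos.
Qed.

Lemma measurable_abs_itv (R : realType) (a b : R) :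
  measurable [set x : R | a <= `|x| <= b].
Proof.
have := normr_measurable measurableT (measurable_itv `[a, b]%O); rewrite setTI.
by congr measurable; apply/seteqP; split => x /=; rewrite in_itv.
Qed.

Lemma cos_le_cos_abs (R : realType) (delta x : R) :
  0 <= delta -> delta <= `|x| <= pi -> cos x <= cos delta.
Proof.
move=> d0 /andP[dx xpi].
have -> : cos x = cos `|x| by case: (ler0P x) => _; rewrite ?cosN.
by rewrite leNgt ltr_cos -?leNgt // in_itv /= ?d0 ?(le_trans dx xpi) ?normr_ge0.
Qed.

Section OptimalKernel.
Variables (R : realType) (f : R -> R).
Hypothesis f_ge0 : forall x, - pi <= x <= pi -> 0 <= f x.

Local Notation D := (`[(- pi)%R, pi] : set R).
Local Notation mu := (@lebesgue_measure R).

Let inD x : D x -> - pi <= x <= pi.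
Proof. by rewrite /= in_itv. Qed.

Lemma qform_ge0 q : 0 <= qform f q.
Proof.
rewrite /qform /Rintegral fine_ge0 // integral_ge0 // => x /inD Dx.
by rewrite lee_fin mulr_ge0 ?sqmod_ge0 ?f_ge0.
Qed.

Lemma sigma2_le_qform n q : Qn1 n q -> sigma2 f n <= qform f q.
Proof.
move=> Qq; apply: ge_inf; last by exists q.
by exists 0 => _ [r _ <-]; exact: qform_ge0.
Qed.

Lemma sigma2_ge0 n : 0 <= sigma2 f n.
Proof.
apply: lb_le_inf; first by exists (qform f 1), 1 => //; exact: Qn1_1.
by move=> _ [q _ <-]; exact: qform_ge0.
Qed.

Lemma sigma2S_le n : sigma2 f n.+1 <= sigma2 f n.
Proof.
apply: lb_le_inf; first by exists (qform f 1), 1 => //; exact: Qn1_1.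
move=> _ [q [size_q q1] <-]; apply: sigma2_le_qform; split=> //.
exact: leq_trans size_q _.
Qed.

Lemma qform_mul_halfX1 q : qform f (q * halfX1 R) =
  Rintegral mu D (fun x => sqmod q.[expi x] * f x * ((1 + cos x) / 2)).
Proof.
rewrite /qform; congr Rintegral; apply/funext => x.
by rewrite hornerM sqmodM sqmod_halfX1_expi mulrAC.
Qed.

Hypothesis mf : measurable_fun D f.
Variable p : nat -> {poly R[i]}.
Hypothesis p_opt : forall n, optimal_poly f n (p n).
Hypothesis sigma2_gt0 : forall n, 0 < sigma2 f n.

Let h n x := sqmod (p n).[expi x] * f x.

Let mh n : measurable_fun D (h n).
Proof.
apply: measurable_funM => //.
exact: measurable_funS (measurable_sqmod_horner_expi _).
Qed.

Let h_ge0 n x : D x -> 0 <= h n x.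
Proof. by move=> /inD Dx; rewrite mulr_ge0 ?sqmod_ge0 ?f_ge0. Qed.

Lemma integral_optimal n : (\int[mu]_(x in D) (h n x)%:E = (sigma2 f n)%:E)%E.
Proof.
(* [fine] sends [+oo] to [0], so [0 < sigma2 f n] rules out an infinite integral. *)
have [_ qform_p] := p_opt n; move: (sigma2_gt0 n); rewrite -qform_p /qform /Rintegral.
by case: (\int[mu]_(x in D) _)%E; rewrite //= ltxx.
Qed.

Lemma integral_Kn n (B : set R) : measurable B -> B `<=` D ->
  (\int[mu]_(x in B) (Kn f p n x)%:E =
   \int[mu]_(x in B) (h n x)%:E * ((sigma2 f n)^-1)%:E)%E.
Proof.
move=> mB BD; under eq_integral do rewrite EFinM.
rewrite ge0_integralZr //.
- by apply/measurable_EFinP; exact: measurable_funS (mh n).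
- by move=> x /BD Dx; rewrite lee_fin h_ge0.
- by rewrite lee_fin invr_ge0 sigma2_ge0.
Qed.

Lemma Kn_ge0 n x : - pi <= x <= pi -> 0 <= Kn f p n x.
Proof. by move=> Dx; rewrite divr_ge0 ?sigma2_ge0 // mulr_ge0 ?sqmod_ge0 ?f_ge0. Qed.

Lemma integral_Kn_1 n : (\int[mu]_(x in D) (Kn f p n x)%:E = 1)%E.
Proof.
rewrite (integral_Kn _ (measurable_itv _)) //.
by rewrite integral_optimal -EFinM mulfV ?gt_eqF.
Qed.

Lemma integral_tail_le n (A : set R) (k : R) :
  measurable A -> A `<=` D -> 0 < k -> (forall x, A x -> k <= (1 - cos x) / 2) ->
  (k%:E * \int[mu]_(x in A) (h n x)%:E <= (sigma2 f n - sigma2 f n.+1)%:E)%E.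
Proof.
move=> mA AD k0 kA; have mD : measurable D := measurable_itv _.
have mw : measurable_fun D (fun x : R => (1 + cos x) / 2).
  apply: measurable_funM; last exact: measurable_cst.
  apply: measurable_funD; first exact: measurable_cst.
  exact: measurable_funS (continuous_measurable_fun (@continuous_cos R)).
have w01 x : D x -> 0 <= (1 + cos x) / 2 <= 1.
  by move=> _; have := cos_geN1 x; have := cos_le1 x; lra.
have kw x : A x -> k <= 1 - (1 + cos x) / 2 by move/kA; lra.
have := ge0_integral_weight_le mu mD mA AD (mh n) mw (h_ge0 n) w01 (ltW k0) kw.
have : sigma2 f n.+1 <=
    fine (\int[mu]_(x in D) (h n x * ((1 + cos x) / 2))%:E)%E.
  by rewrite -[fine _]/(Rintegral _ _ _) -qform_mul_halfX1;
    apply: sigma2_le_qform; apply: Qn1_mul_halfX1; case: (p_opt n).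
have J0 : (0 <= \int[mu]_(x in A) (h n x)%:E)%E.
  by apply: integral_ge0 => x /AD Dx; rewrite lee_fin h_ge0.
have G0 : (0 <= \int[mu]_(x in D) (h n x * ((1 + cos x) / 2))%:E)%E.
  by apply: integral_ge0 => x Dx; have /andP[? _] := w01 x Dx;
    rewrite lee_fin mulr_ge0 ?h_ge0.
rewrite integral_optimal; move: J0 G0.
case: (\int[mu]_(x in A) _)%E => [j| |]; case: (\int[mu]_(x in D) _)%E => [g| |] //=.
- by rewrite -EFinM -EFinD !lee_fin => _ _ sg; lra.
- by move=> _ _ _; rewrite gt0_muley ?lte_fin.
- by move=> _ _ _; rewrite gt0_muley ?lte_fin.
Qed.

Lemma integral_Kn_tail_le n (A : set R) (k : R) :
  measurable A -> A `<=` D -> 0 < k -> (forall x, A x -> k <= (1 - cos x) / 2) ->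
  (\int[mu]_(x in A) (Kn f p n x)%:E
     <= ((1 - sigma2 f n.+1 / sigma2 f n) / k)%:E)%E.
Proof.
move=> mA AD k0 kA; rewrite integral_Kn //.
have := integral_tail_le n mA AD k0 kA.
have J0 : (0 <= \int[mu]_(x in A) (h n x)%:E)%E.
  by apply: integral_ge0 => x /AD Dx; rewrite lee_fin h_ge0.
have s0 := sigma2_gt0 n.
move: J0; case: (\int[mu]_(x in A) _)%E => [j| |] //=; last first.
  by move=> _; rewrite gt0_muley ?lte_fin.
rewrite -!EFinM !lee_fin => j0.
move: (sigma2 f n) (sigma2 f n.+1) s0 => s s' s0 kj.
have [kN0 sN0] : k != 0 /\ s != 0 by split; exact: lt0r_neq0.
rewrite -(ler_pM2r (mulr_gt0 k0 s0)).
rewrite (_ : j / s * (k * s) = k * j); last by field.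
by rewrite (_ : (1 - s' / s) / k * (k * s) = s - s'); last by field; apply/andP.
Qed.

End OptimalKernel.

Theorem lemma5p2 (R : realType) (f : R -> R)
  (f_ge0 : forall x, - pi <= x <= pi -> 0 <= f x)
  (f_int : (@lebesgue_measure R).-integrable `[(- pi)%R, pi] (EFin \o f))
  (f_pos : (0 < \int[@lebesgue_measure R]_(x in `[(- pi)%R, pi]) (f x)%:E)%E)
  (ratio : (fun n => sigma2 f n.+1 / sigma2 f n) @ \oo --> (1 : R)%R)
  (p : nat -> {poly R[i]})
  (p_opt : forall n, optimal_poly f n (p n)) :
  (forall n x, - pi <= x <= pi -> 0 <= Kn f p n x) /\
  (forall n, (\int[@lebesgue_measure R]_(x in `[(- pi)%R, pi]) (Kn f p n x)%:E
               = 1)%E) /\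
  (forall delta : R, 0 < delta <= pi ->
     (fun n => (\int[@lebesgue_measure R]_(x in [set x : R | (delta <= `|x| <= pi)%R])
                  (Kn f p n x)%:E)%E) @ \oo --> 0%E).
Proof.
have mf : measurable_fun `[(- pi)%R, pi] f.
  by apply/measurable_EFinP; exact: measurable_int f_int.
have sigma2_gt0 := gt0_ratio_cvg1 (sigma2_ge0 f_ge0) (sigma2S_le f_ge0) ratio.
split; first exact: Kn_ge0.
split; first exact: integral_Kn_1.
move=> delta /andP[d0 dpi]; set k := (1 - cos delta) / 2.
have k0 : 0 < k by rewrite divr_gt0 // subr_gt0 cos_lt1 ?d0.
apply: (@squeeze_cvge _ _ _ _ (fun=> 0%E) _
  (fun n => ((1 - sigma2 f n.+1 / sigma2 f n) / k)%:E)); last first.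
- apply/fine_cvgP; split; first exact: nearW.
  rewrite -[0](mul0r k^-1) -(subrr 1).
  by apply: cvgMr_tmp; apply: cvgB => //; exact: cvg_cst.
- exact: cvg_cst.
apply: nearW => n; rewrite integral_ge0 /=; last first.
  by move=> x /andP[_ xpi]; rewrite lee_fin Kn_ge0 // -ler_norml.
apply: integral_Kn_tail_le => //; first exact: measurable_abs_itv.
- by move=> x /andP[_ xpi]; rewrite /= in_itv /= -ler_norml.
- by move=> x /(cos_le_cos_abs (ltW d0)) cx; rewrite /k; lra.
Qed.
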